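(* Let $\mathbf{C}$ be a class of dependence structures such that $\mathbf{C}$ contains a closure operator dependence structure $\mathcal{D}_{(M,\mathrm{cl})}$ for some closure system $(M,\mathrm{cl})$ with $\emptyset\neq\mathrm{cl}(\emptyset)\neq M$. Then for every set $\Sigma$ of dependence atoms over $V$ and every dependence atom $\phi$ over $V$, $$\Sigma\vdash_{\mathcal{D}}\phi\iff\Sigma\models_{\mathbf{C}}\phi.$$
   Context: Fix a countably infinite set $V$ of variables. A dependence atom over $V$ is an expression $\mathrm{dep}(\vec x,\vec y)$ with $\vec x,\vec y$ finite sequences of variables from $V$ such that $\vec y\neq\emptyset$ whenever $\vec x\neq\emptyset$. Concatenation is written $\vec x\vec y$. $\Sigma\vdash_{\mathcal{D}}\phi$ means $\phi$ belongs to the smallest set of dependence atoms containing $\Sigma$ and closed under the rules: (a) $\mathrm{dep}(\vec x,\vec x)$ (including $\mathrm{dep}(\emptyset,\emptyset)$); (b) from $\mathrm{dep}(\vec x,\vec y\vec z)$ infer $\mathrm{dep}(\vec x\vec u,\vec y)$; (c) from $\mathrm{dep}(\vec x,\vec y)$ and $\mathrm{dep}(\vec y,\vec z)$ infer $\mathrm{dep}(\vec x,\vec z)$; (d) from $\mathrm{dep}(\vec x,\vec y)$ and $\mathrm{dep}(\vec x,\vec v)$ infer $\mathrm{dep}(\vec x,\vec y\vec v)$; (e) from $\mathrm{dep}(\vec x,\vec y)$ infer $\mathrm{dep}(\vec z,\vec y)$ for any permutation $\vec z$ of $\vec x$ (only well-formed atoms are considered). A dependence structure is a pair $(I,\Rightarrow)$,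 $I$ a nonempty set and $\Rightarrow$ a binary relation on finite subsets of $I$ such that for all finite $\mathbf{x},\mathbf{y},\mathbf{z},\mathbf{u}\subseteq I$ (writing $\mathbf{x}\mathbf{y}$ for $\mathbf{x}\cup\mathbf{y}$): (D1) $\mathbf{x}\Rightarrow\mathbf{x}$; (D2) $\mathbf{x}\Rightarrow\mathbf{y}\mathbf{z}$ implies $\mathbf{x}\mathbf{u}\Rightarrow\mathbf{y}$; (D3) $\mathbf{x}\Rightarrow\mathbf{y}$ and $\mathbf{y}\Rightarrow\mathbf{z}$ imply $\mathbf{x}\Rightarrow\mathbf{z}$; (D4) $\mathbf{x}\Rightarrow\mathbf{y}$ and $\mathbf{x}\Rightarrow\mathbf{z}$ imply $\mathbf{x}\Rightarrow\mathbf{y}\mathbf{z}$. A closure system is a set $M$ with $\mathrm{cl}:\mathcal{P}(M)\to\mathcal{P}(M)$ such that $A\subseteq\mathrm{cl}(A)$, $A\subseteq B\Rightarrow\mathrm{cl}(A)\subseteq\mathrm{cl}(B)$, and $\mathrm{cl}(\mathrm{cl}(A))=\mathrm{cl}(A)$. Its closure operator dependence structure is $\mathcal{D}_{(M,\mathrm{cl})}=(M,\Rightarrow)$ with $\mathbf{x}\Rightarrow\mathbf{y}$ iff $\mathbf{y}\subseteq\mathrm{cl}(\mathbf{x})$. Semantics: an assignment is a map $s:V\to I$, with $s((x_0,\dots,x_{n-1}))=\{s(x_0),\dots,s(x_{n-1})\}$; $s$ satisfies $\mathrm{dep}(\vec x,\vec y)$ in $(I,\Rightarrow)$ iff $s(\vec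 x)\Rightarrow s(\vec y)$. $\Sigma\models_{\mathbf{C}}\phi$ means every assignment into every structure of $\mathbf{C}$ satisfying all of $\Sigma$ satisfies $\phi$. *)

From Stdlib Require Import List Permutation.
Import ListNotations.

Definition var := nat.

(* A (candidate) dependence atom dep(xs, ys). *)
Definition atom := (list var * list var)%type.

Definition wf_atom (a : atom) : Prop := fst a <> [] -> snd a <> [].

Inductive derives (Sigma : atom -> Prop) : atom -> Prop :=
| d_hyp : forall a, Sigma a -> derives Sigma a
| d_refl : forall x, derives Sigma (x, x)
| d_proj : forall x y z u,
    derives Sigma (x, y ++ z) -> wf_atom (x ++ u, y) ->
    derives Sigma (x ++ u, y)
| d_trans : forall x y z,
    derives Sigma (x, y) -> derives Sigma (y, z) -> wf_atom (x, z) ->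
    derives Sigma (x, z)
| d_union : forall x y v,
    derives Sigma (x, y) -> derives Sigma (x, v) -> wf_atom (x, y ++ v) ->
    derives Sigma (x, y ++ v)
| d_perm : forall x z y,
    derives Sigma (x, y) -> Permutation x z -> wf_atom (z, y) ->
    derives Sigma (z, y).

(* Subsets of a type are predicates. *)
Definition finite {I : Type} (A : I -> Prop) : Prop :=
  exists l : list I, forall a, A a <-> In a l.
Definition setU {I : Type} (A B : I -> Prop) : I -> Prop := fun a => A a \/ B a.
Definition subset {I : Type} (A B : I -> Prop) : Prop := forall a, A a -> B a.

(* A pair (I, =>) with => a binary relation on (finite) subsets of I. *)
Record dstruct := DStruct {
  carrier : Type;
  drel : (carrier -> Prop) -> (carrier -> Prop) -> Prop
}.

Definition is_dependence_structure (D : dstruct) : Prop :=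
  (exists i : carrier D, True) /\
  (forall x, finite x -> drel D x x) /\
  (forall x y z u, finite x -> finite y -> finite z -> finite u ->
     drel D x (setU y z) -> drel D (setU x u) y) /\
  (forall x y z, finite x -> finite y -> finite z ->
     drel D x y -> drel D y z -> drel D x z) /\
  (forall x y z, finite x -> finite y -> finite z ->
     drel D x y -> drel D x z -> drel D x (setU y z)).

Definition is_closure_system (M : Type) (cl : (M -> Prop) -> (M -> Prop)) : Prop :=
  (forall A, subset A (cl A)) /\
  (forall A B, subset A B -> subset (cl A) (cl B)) /\
  (forall A a, cl (cl A) a <-> cl A a).

Definition closure_ds (M : Type) (cl : (M -> Prop) -> (M -> Prop)) : dstruct :=
  DStruct M (fun x y => subset y (cl x)).

Definition img {I : Type} (s : var -> I) (xs : list var) : I -> Prop :=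
  fun i => exists v, In v xs /\ s v = i.

Definition satisfies (D : dstruct) (s : var -> carrier D) (a : atom) : Prop :=
  drel D (img s (fst a)) (img s (snd a)).

Definition entails (C : dstruct -> Prop) (Sigma : atom -> Prop) (phi : atom) : Prop :=
  forall D, C D -> forall s : var -> carrier D,
    (forall psi, Sigma psi -> satisfies D s psi) -> satisfies D s phi.

From Stdlib Require Import List Permutation.
From Stdlib Require Import Classical ClassicalEpsilon FunctionalExtensionality PropExtensionality.
Import ListNotations.

(* Soundness: each rule of D is an instance of an axiom D1-D4 once variable
   lists are read as the finite sets of their values (images of lists turn
   concatenation into union and ignore permutations).

   Completeness: suppose Sigma does not derive dep(x,y).  Let X be the set
   of variables v with Sigma |- dep(x,v); X is closed under the atoms of
   Sigma.  Fix a in cl({}) and b outside cl({}), and send the variables of X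
   to a and all others to b.  In D_(M,cl) such a two-valued assignment
   satisfies dep(u,w) exactly when u within X forces w within X.  Hence it
   satisfies Sigma, and, since x lies in X but y does not, it violates
   dep(x,y). *)

Lemma img_app {I : Type} (s : var -> I) (l1 l2 : list var) :
  img s (l1 ++ l2) = setU (img s l1) (img s l2).
Proof.
  apply functional_extensionality; intro i; apply propositional_extensionality.
  unfold img, setU; split.
  - intros [v [Hv Hs]]; apply in_app_or in Hv as [H|H]; eauto.
  - intros [[v [Hv Hs]]|[v [Hv Hs]]]; exists v; split; auto; apply in_or_app; auto.
Qed.

Lemma img_perm {I : Type} (s : var -> I) (l1 l2 : list var) :
  Permutation l1 l2 -> img s l1 = img s l2.
Proof.
  intro P.
  apply functional_extensionality; intro i; apply propositional_extensionality.
  unfold img; split; intros [v [Hv Hs]]; exists v; split; auto.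
  - eapply Permutation_in; eauto.
  - eapply Permutation_in; [apply Permutation_sym|]; eauto.
Qed.

Lemma img_finite {I : Type} (s : var -> I) (l : list var) : finite (img s l).
Proof.
  exists (map s l); intro i; unfold img; split.
  - intros [v [Hv <-]]; apply in_map; auto.
  - intro H; apply in_map_iff in H as [v [Hs Hv]]; eauto.
Qed.

Lemma derives_sound (D : dstruct) (Sigma : atom -> Prop) (s : var -> carrier D) :
  is_dependence_structure D ->
  (forall psi, Sigma psi -> satisfies D s psi) ->
  forall a, derives Sigma a -> satisfies D s a.
Proof.
  intros [_ [D1 [D2 [D3 D4]]]] HS a Hd.
  induction Hd; unfold satisfies in *; simpl in *; auto.
  - apply D1, img_finite.
  - rewrite img_app in *. apply D2 with (z := img s z); auto using img_finite.
  - eauto using img_finite.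
  - rewrite img_app. apply D4; auto using img_finite.
  - rewrite <- (img_perm s _ _ H). auto.
Qed.

Section DerivedRules.
Variable Sigma : atom -> Prop.

Lemma wf_singleton (x : list var) (v : var) : wf_atom (x, [v]).
Proof. intros _ H; discriminate. Qed.

Lemma derives_member (w : list var) (t : var) : In t w -> derives Sigma (w, [t]).
Proof.
  intro Ht. apply in_split in Ht as [pre [post ->]].
  apply d_perm with (x := t :: pre ++ post).
  - apply (d_proj Sigma [t] [t] [] (pre ++ post)); [apply d_refl | apply wf_singleton].
  - apply Permutation_middle.
  - apply wf_singleton.
Qed.

Lemma derives_pick (x w : list var) (t : var) :
  derives Sigma (x, w) -> In t w -> derives Sigma (x, [t]).
Proof.
  intros H Ht. apply d_trans with w; auto using derives_member, wf_singleton.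
Qed.

Lemma derives_join (x y : list var) :
  y <> [] -> (forall v, In v y -> derives Sigma (x, [v])) -> derives Sigma (x, y).
Proof.
  induction y as [|v y IH]; intros Hne H; [congruence|].
  destruct y as [|w y].
  - apply H; simpl; auto.
  - apply (d_union Sigma x [v] (w :: y)).
    + apply H; simpl; auto.
    + apply IH; [discriminate|]. intros t Ht; apply H; simpl; auto.
    + intros _; discriminate.
Qed.

Lemma derives_weaken_const (x : list var) (t : var) :
  derives Sigma ([], [t]) -> derives Sigma (x, [t]).
Proof. intro H. apply (d_proj Sigma [] [t] [] x); auto using wf_singleton. Qed.

Lemma derives_iff_singletons (x y : list var) :
  wf_atom (x, y) ->
  derives Sigma (x, y) <-> (forall v, In v y -> derives Sigma (x, [v])).
Proof.
  intro Hwf; split.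
  - intros H v Hv. exact (derives_pick x y v H Hv).
  - intro H. destruct y as [|v y]; [|apply derives_join; [discriminate | exact H]].
    destruct x as [|u x]; [apply d_refl|].
    exfalso; apply Hwf; simpl; [discriminate | reflexivity].
Qed.

Lemma determined_closed (x u w : list var) :
  Sigma (u, w) -> wf_atom (u, w) ->
  (forall v, In v u -> derives Sigma (x, [v])) ->
  forall t, In t w -> derives Sigma (x, [t]).
Proof.
  intros Huw Hwf Hu t Ht. destruct u as [|u1 u].
  - apply derives_weaken_const, derives_pick with w; auto. apply d_hyp; auto.
  - apply derives_pick with w; auto.
    apply d_trans with (u1 :: u).
    + apply derives_join; [discriminate | exact Hu].
    + apply d_hyp; auto.
    + intros _. apply Hwf; simpl; discriminate.
Qed.

End DerivedRules.

Section TwoPoint.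
Variables (M : Type) (cl : (M -> Prop) -> (M -> Prop)).
Hypothesis Hclosure : is_closure_system M cl.
Variables (a b : M).
Hypothesis Ha : cl (fun _ => False) a.
Hypothesis Hb : ~ cl (fun _ => False) b.
Variable P : var -> Prop.

Definition two_point (v : var) : M :=
  if excluded_middle_informative (P v) then a else b.

Lemma two_point_in (v : var) : P v -> two_point v = a.
Proof. unfold two_point; destruct (excluded_middle_informative (P v)); tauto. Qed.

Lemma two_point_out (v : var) : ~ P v -> two_point v = b.
Proof. unfold two_point; destruct (excluded_middle_informative (P v)); tauto. Qed.

(* a lies in every closed set, since cl is monotone. *)
Lemma cl_contains_a (A : M -> Prop) : cl A a.
Proof.
  destruct Hclosure as [_ [Cmon _]]. apply (Cmon (fun _ => False)); auto.
  intros ? [].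
Qed.

Lemma two_point_satisfies (u w : list var) :
  satisfies (closure_ds M cl) two_point (u, w) <->
  ((forall v, In v u -> P v) -> forall t, In t w -> P t).
Proof.
  destruct Hclosure as [Cext [Cmon Cidem]].
  unfold satisfies; simpl; split.
  - intros Hsat Hu t Ht. apply NNPP; intro Hnt.
    assert (Hcl_b : cl (img two_point u) b).
    { apply Hsat. exists t; split; auto. apply two_point_out; auto. }
    apply Hb, Cidem. apply (Cmon (img two_point u)); auto.
    intros i [v [Hv <-]]. rewrite two_point_in; auto.
  - intros Himp i [t [Ht <-]].
    destruct (classic (P t)) as [Pt|nPt].
    + rewrite two_point_in; auto using cl_contains_a.
    + destruct (classic (exists v, In v u /\ ~ P v)) as [[v [Hv nPv]]|Hall].
      * rewrite two_point_out; auto. apply Cext. exists v; split; auto.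
        apply two_point_out; auto.
      * exfalso; apply nPt, Himp; auto.
        intros v Hv; apply NNPP; intro; apply Hall; eauto.
Qed.

End TwoPoint.

Theorem theorem3 (C : dstruct -> Prop)
  (HC : forall D, C D -> is_dependence_structure D)
  (Hcl : exists (M : Type) (cl : (M -> Prop) -> (M -> Prop)),
      is_closure_system M cl /\
      (exists m, cl (fun _ => False) m) /\
      (exists m, ~ cl (fun _ => False) m) /\
      C (closure_ds M cl))
  (Sigma : atom -> Prop) (HSigma : forall a, Sigma a -> wf_atom a)
  (phi : atom) (Hphi : wf_atom phi) :
  derives Sigma phi <-> entails C Sigma phi.
Proof.
  split.
  - intros Hd D HCD s HS. exact (derives_sound D Sigma s (HC D HCD) HS phi Hd).
  - intro Hent. destruct phi as [x y].
    destruct Hcl as [M [cl [Hclosure [[a Ha] [[b Hb] HCM]]]]].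
    set (X := fun v => derives Sigma (x, [v])).
    assert (Hsat : forall psi, Sigma psi ->
                   satisfies (closure_ds M cl) (two_point M a b X) psi).
    { intros [u w] Huw. apply two_point_satisfies; auto.
      exact (determined_closed Sigma x u w Huw (HSigma _ Huw)). }
    assert (Hxy : (forall v, In v x -> X v) -> forall t, In t y -> X t).
    { apply (two_point_satisfies M cl Hclosure a b Ha Hb X x y).
      exact (Hent _ HCM _ Hsat). }
    apply derives_iff_singletons; auto.
    apply Hxy. intros v Hv. apply derives_member; auto.
Qed.
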